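(* The operators $L=A^*A$, $R=B^*B$, $C=(AB)^3$ are invertible, symmetric and grading-preserving, and satisfy $ACA=BCB=C^{-1}$, $LCL^{-1}=RCR^{-1}=C$, $ALA=L^{-1}$, $BRB=R^{-1}$, $ARA=L^{-1}RC^{-1}$, $BLB=R^{-1}LC$.
   Context: Let $\mathcal C$ be a strict monoidal category with tensor product $\boxtimes$ and unit object $\mathbb I$ which is an Ab-category (all Hom-sets are abelian groups, composition and $\boxtimes$ are biadditive) whose ground ring $\mathsf k=\operatorname{End}(\mathbb I)$ is a field; each $\operatorname{Hom}(V,W)$ is a $\mathsf k$-vector space via $kf=k\boxtimes f$, and $\boxtimes$ is $\mathsf k$-bilinear on morphisms. An object $V$ is simple if $\operatorname{End}(V)=\mathsf k\,\mathrm{Id}_V$; for such $V$ and $f\in\operatorname{End}(V)$, $\langle f\rangle\in\mathsf k$ denotes the scalar with $f=\langle f\rangle\mathrm{Id}_V$. For objects $V_i$ write $H^{ij}_k=\operatorname{Hom}(V_k,V_i\boxtimes V_j)$ and $H^k_{ij}=\operatorname{Hom}(V_i\boxtimes V_j,V_k)$. A $\Psi$-system in $\mathcal C$ consists of (1) a family of simple objects $\{V_i\}_{i\in I}$ with $\operatorname{Hom}(V_i,V_j)=0$ for $i\neq j$; (2) an involution $i\mapsto i^*$ of $I$; (3) morphisms $b_i:\mathbb I\to V_i\boxtimes V_{i^*}$, $d_i:V_i\boxtimes V_{i^*}\to\mathbb I$ ($i\in I$) with $(\mathrm{Id}_{V_i}\boxtimes d_{i^*})(b_i\boxtimes\mathrm{Id}_{V_i})=\mathrm{Id}_{V_i}$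 and $(d_i\boxtimes\mathrm{Id}_{V_i})(\mathrm{Id}_{V_i}\boxtimes b_{i^*})=\mathrm{Id}_{V_i}$; (4) for all $i,j\in I$ such that $H^{ij}_k\neq0$ for some $k\in I$, the morphism $\mathrm{Id}_{V_i\boxtimes V_j}$ lies in the image of the linear map $\bigoplus_{k\in I}H^{ij}_k\otimes_{\mathsf k}H^k_{ij}\to\operatorname{End}(V_i\boxtimes V_j)$, $x\otimes y\mapsto x\circ y$. Fix a $\Psi$-system in $\mathcal C$. Let $\hat H=\bigoplus_{i,j,k\in I}H^k_{ij}$, $\check H=\bigoplus_{i,j,k\in I}H^{ij}_k$, $H=\hat H\oplus\check H$, and let $\pi^k_{ij}:H\to H^k_{ij}$, $\pi^{ij}_k:H\to H^{ij}_k$ be the projections. Define $A,B\in\operatorname{End}_{\mathsf k}(H)$ by $Ax=\sum_{i,j,k\in I}\big((\mathrm{Id}_{V_{i^*}}\boxtimes\pi^k_{ij}x)(b_{i^*}\boxtimes\mathrm{Id}_{V_j})+(d_{i^*}\boxtimes\mathrm{Id}_{V_j})(\mathrm{Id}_{V_{i^*}}\boxtimes\pi^{ij}_kx)\big)$, $Bx=\sum_{i,j,k\in I}\big((\pi^k_{ij}x\boxtimes\mathrm{Id}_{V_{j^*}})(\mathrm{Id}_{V_i}\boxtimes b_j)+(\mathrm{Id}_{V_i}\boxtimes d_j)(\pi^{ij}_kx\boxtimes\mathrm{Id}_{V_{j^*}})\big)$. Define the symmetric bilinear form on $H$: $\langle x,y\rangle=\sum_{i,j,k\in I}\big(\langle\pi^k_{ij}x\circ\pi^{ij}_ky\rangle+\langle\pi^k_{ij}y\circ\pi^{ij}_kx\rangle\big)$.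 A transpose of $f\in\operatorname{End}(H)$ is the (unique) $f^*\in\operatorname{End}(H)$ with $\langle fx,y\rangle=\langle x,f^*y\rangle$ for all $x,y\in H$; $A^*$, $B^*$ denote the transposes of $A$, $B$ (which exist). An operator $f$ is symmetric if $f^*=f$, and grading-preserving if $f(H^{ij}_k)\subset H^{ij}_k$ and $f(H^k_{ij})\subset H^k_{ij}$ for all $i,j,k\in I$. *)

From HB Require Import structures.
From mathcomp Require Import all_boot all_algebra.
From Stdlib Require Import ClassicalEpsilon.
Set Implicit Arguments.
Unset Strict Implicit.
Unset Printing Implicit Defensive.
Import GRing.Theory.
Local Open Scope ring_scope.

Definition castH {O : Type} (H : O -> O -> Type) {U U' W W' : O}
  (e1 : U = U') (e2 : W = W') (f : H U W) : H U' W' :=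
  match e2 in _ = W1 return H U' W1 with
  | erefl => match e1 in _ = U1 return H U1 W with erefl => f end end.

Record smcat_data (k : fieldType) := SMData {
  Ob : Type;
  Hom : Ob -> Ob -> lmodType k;
  comp : forall U W X : Ob, Hom W X -> Hom U W -> Hom U X;
  idm : forall U : Ob, Hom U U;
  tens : Ob -> Ob -> Ob;
  unitO : Ob;
  tensm : forall U W U' W' : Ob, Hom U U' -> Hom W W' -> Hom (tens U W) (tens U' W');
  tensA : forall U W X : Ob, tens (tens U W) X = tens U (tens W X);
  tens1U : forall U : Ob, tens unitO U = U;
  tensU1 : forall U : Ob, tens U unitO = U }.

Arguments Ob {k} s : rename.
Arguments Hom {k} D U W : rename.
Arguments comp {k D U W X} : rename.
Arguments idm {k D} : rename.
Arguments tens {k D} : rename.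
Arguments unitO {k} : rename.
Arguments tensm {k D U W U' W'} : rename.
Arguments tensA {k D} : rename.
Arguments tens1U {k D} : rename.
Arguments tensU1 {k D} : rename.

Definition castm {k : fieldType} (D : smcat_data k) {U U' W W' : Ob D}
  (e1 : U = U') (e2 : W = W') (f : Hom D U W) : Hom D U' W' :=
  @castH (Ob D) (fun X Y => (Hom D X Y : Type)) U U' W W' e1 e2 f.
Arguments castm {k} D {U U' W W'}.

Definition compc {k : fieldType} {D : smcat_data k} {U W1 W2 X : Ob D}
  (e : W1 = W2) (g : Hom D W2 X) (f : Hom D U W1) : Hom D U X :=
  comp g (castm D erefl e f).

Record smcat_axioms (k : fieldType) (D : smcat_data k) : Prop := {
  compA : forall (U W X Y : Ob D) (h : Hom D X Y) (g : Hom D W X) (f : Hom D U W),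
    comp h (comp g f) = comp (comp h g) f;
  comp1m : forall (U W : Ob D) (f : Hom D U W), comp (idm W) f = f;
  compm1 : forall (U W : Ob D) (f : Hom D U W), comp f (idm U) = f;
  compDl : forall (U W X : Ob D) (g g' : Hom D W X) (f : Hom D U W),
    comp (g + g') f = comp g f + comp g' f;
  compDr : forall (U W X : Ob D) (g : Hom D W X) (f f' : Hom D U W),
    comp g (f + f') = comp g f + comp g f';
  compZl : forall (U W X : Ob D) (c : k) (g : Hom D W X) (f : Hom D U W),
    comp (c *: g) f = c *: comp g f;
  compZr : forall (U W X : Ob D) (c : k) (g : Hom D W X) (f : Hom D U W),
    comp g (c *: f) = c *: comp g f;
  tensm_comp : forall (U W X U' W' X' : Ob D) (f : Hom D W X) (g : Hom D U W)
      (f' : Hom D W' X') (g' : Hom D U' W'),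
    tensm (comp f g) (comp f' g') = comp (tensm f f') (tensm g g');
  tensm_id : forall U W : Ob D, tensm (idm U) (idm W) = idm (tens U W);
  tensmA : forall (U W X U' W' X' : Ob D) (f : Hom D U U') (g : Hom D W W') (h : Hom D X X'),
    castm D (tensA U W X) (tensA U' W' X') (tensm (tensm f g) h) = tensm f (tensm g h);
  tensm1l : forall (U W : Ob D) (f : Hom D U W),
    castm D (tens1U U) (tens1U W) (tensm (idm (unitO D)) f) = f;
  tensm1r : forall (U W : Ob D) (f : Hom D U W),
    castm D (tensU1 U) (tensU1 W) (tensm f (idm (unitO D))) = f;
  tensmDl : forall (U W U' W' : Ob D) (f f' : Hom D U U') (g : Hom D W W'),
    tensm (f + f') g = tensm f g + tensm f' g;
  tensmDr : forall (U W U' W' : Ob D) (f : Hom D U U') (g g' : Hom D W W'),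
    tensm f (g + g') = tensm f g + tensm f g';
  tensmZl : forall (U W U' W' : Ob D) (c : k) (f : Hom D U U') (g : Hom D W W'),
    tensm (c *: f) g = c *: tensm f g;
  tensmZr : forall (U W U' W' : Ob D) (c : k) (f : Hom D U U') (g : Hom D W W'),
    tensm f (c *: g) = c *: tensm f g;
  scale_tens : forall (U W : Ob D) (c : k) (f : Hom D U W),
    c *: f = castm D (tens1U U) (tens1U W) (tensm (c *: idm (unitO D)) f);
  end_unit : forall f : Hom D (unitO D) (unitO D), exists c : k, f = c *: idm (unitO D);
  idm_unit_neq0 : idm (unitO D) != 0 }.

Record psi_data (k : fieldType) (D : smcat_data k) (I : choiceType) := PsiData {
  Vo : I -> Ob D;
  star : I -> I;
  star_invol : forall i, star (star i) = i;
  bv : forall i, Hom D (unitO D) (tens (Vo i) (Vo (star i)));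
  dv : forall i, Hom D (tens (Vo i) (Vo (star i))) (unitO D) }.

Arguments Vo {k D I}.
Arguments star {k D I}.
Arguments star_invol {k D I}.
Arguments bv {k D I}.
Arguments dv {k D I}.

Section Psi.
Variables (k : fieldType) (D : smcat_data k) (I : choiceType) (P : psi_data D I).

Local Notation V := (Vo P).
Local Notation "i ^*" := (star P i).

(* H^k_{ij} = Hom(V_i (x) V_j, V_k) and H^{ij}_k = Hom(V_k, V_i (x) V_j) *)
Definition Hh (i j l : I) := Hom D (tens (V i) (V j)) (V l).
Definition Hc (i j l : I) := Hom D (V l) (tens (V i) (V j)).

Definition eZ (i : I) : tens (tens (V i) (V i^*)) (V i) = tens (V i) (tens (V i^*) (V (i^*)^*)) :=
  etrans (tensA _ _ _) (f_equal (fun X => tens (V i) (tens (V i^*) (V X))) (esym (star_invol P i))).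

Definition zig (i : I) : Hom D (V i) (V i) :=
  castm D (tens1U (V i)) (tensU1 (V i))
    (compc (eZ i) (tensm (idm (V i)) (dv P i^*)) (tensm (bv P i) (idm (V i)))).

Definition zag (i : I) : Hom D (V i) (V i) :=
  castm D (tensU1 (V i)) (tens1U (V i))
    (compc (esym (eZ i)) (tensm (dv P i) (idm (V i))) (tensm (idm (V i)) (bv P i^*))).

Record is_psi_system : Prop := {
  psi_simple : forall (i : I) (f : Hom D (V i) (V i)), exists c : k, f = c *: idm (V i);
  psi_simple_neq0 : forall i : I, idm (V i) != 0;
  psi_disj : forall i j : I, i != j -> forall f : Hom D (V i) (V j), f = 0;
  psi_zig : forall i : I, zig i = idm (V i);
  psi_zag : forall i : I, zag i = idm (V i);
  psi_dom : forall i j : I, (exists l : I, exists x : Hc i j l, x != 0) ->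
    exists s : seq {l : I & (Hc i j l * Hh i j l)%type},
      idm (tens (V i) (V j)) = \sum_(p <- s) comp (projT2 p).1 (projT2 p).2 }.

Lemma simple_exb (HP : is_psi_system) (i : I) (f : Hom D (V i) (V i)) :
  exists c : k, f == c *: idm (V i).
Proof. by have [c ->] := psi_simple HP f; exists c. Qed.

Definition scal (HP : is_psi_system) (i : I) (f : Hom D (V i) (V i)) : k :=
  xchoose (simple_exb HP f).

(* H = (+)_{ijk} H^k_{ij} (+) (+)_{ijk} H^{ij}_k : finitely supported families *)
Record Hsp := MkH {
  xh : forall i j l : I, Hh i j l;
  xc : forall i j l : I, Hc i j l;
  xfin : exists s : seq I, forall i j l : I, ~~ [&& i \in s, j \in s & l \in s] ->
    xh i j l = 0 /\ xc i j l = 0 }.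

Definition supp (x : Hsp) : seq I :=
  proj1_sig (constructive_indefinite_description _ (xfin x)).

(* the bilinear form <x,y>; the sum over all i,j,k reduces to the finite support of x *)
Definition form (HP : is_psi_system) (x y : Hsp) : k :=
  let s := undup (supp x) in
  \sum_(i <- s) \sum_(j <- s) \sum_(l <- s)
     (scal HP (comp (xh x i j l) (xc y i j l)) + scal HP (comp (xh y i j l) (xc x i j l))).

Definition is_transpose (HP : is_psi_system) (f g : Hsp -> Hsp) : Prop :=
  forall x y : Hsp, form HP (f x) y = form HP x (g y).

Definition in_Hh (i j l : I) (x : Hsp) : Prop :=
  (forall i' j' l', (i', j', l') != (i, j, l) -> xh x i' j' l' = 0) /\
  (forall i' j' l', xc x i' j' l' = 0).
Definition in_Hc (i j l : I) (x : Hsp) : Prop :=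
  (forall i' j' l', xh x i' j' l' = 0) /\
  (forall i' j' l', (i', j', l') != (i, j, l) -> xc x i' j' l' = 0).

Definition grading_preserving (f : Hsp -> Hsp) : Prop :=
  forall (i j l : I) (x : Hsp),
    (in_Hh i j l x -> in_Hh i j l (f x)) /\ (in_Hc i j l x -> in_Hc i j l (f x)).

Definition cHh1 {a a' : I} (e : a = a') (b c : I) (t : Hh a b c) : Hh a' b c :=
  match e in _ = a1 return Hh a1 b c with erefl => t end.
Definition cHc1 {a a' : I} (e : a = a') (b c : I) (t : Hc a b c) : Hc a' b c :=
  match e in _ = a1 return Hc a1 b c with erefl => t end.
Definition cHh2 {b b' : I} (e : b = b') (a c : I) (t : Hh a b c) : Hh a b' c :=
  match e in _ = b1 return Hh a b1 c with erefl => t end.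
Definition cHc2 {b b' : I} (e : b = b') (a c : I) (t : Hc a b c) : Hc a b' c :=
  match e in _ = b1 return Hc a b1 c with erefl => t end.

Definition eA (i j : I) :
  tens (tens (V i^*) (V (i^*)^*)) (V j) = tens (V i^*) (tens (V i) (V j)) :=
  etrans (tensA _ _ _) (f_equal (fun X => tens (V i^*) (tens (V X) (V j))) (star_invol P i)).

(* A on H^k_{ij}: y |-> (Id_{V_i^*} (x) y)(b_{i^*} (x) Id_{V_j}) in H^{i^* k}_j *)
Definition TA_h (i j l : I) (y : Hh i j l) : Hc i^* l j :=
  castm D (tens1U (V j)) erefl
    (compc (eA i j) (tensm (idm (V i^*)) y) (tensm (bv P i^*) (idm (V j)))).
(* A on H^{ij}_k: y |-> (d_{i^*} (x) Id_{V_j})(Id_{V_i^*} (x) y) in H^j_{i^* k} *)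
Definition TA_c (i j l : I) (y : Hc i j l) : Hh i^* l j :=
  castm D erefl (tens1U (V j))
    (compc (esym (eA i j)) (tensm (dv P i^*) (idm (V j))) (tensm (idm (V i^*)) y)).
(* B on H^k_{ij}: y |-> (y (x) Id_{V_j^*})(Id_{V_i} (x) b_j) in H^{k j^*}_i *)
Definition TB_h (i j l : I) (y : Hh i j l) : Hc l j^* i :=
  castm D (tensU1 (V i)) erefl
    (compc (esym (tensA (V i) (V j) (V j^*))) (tensm y (idm (V j^*))) (tensm (idm (V i)) (bv P j))).
(* B on H^{ij}_k: y |-> (Id_{V_i} (x) d_j)(y (x) Id_{V_j^*}) in H^i_{k j^*} *)
Definition TB_c (i j l : I) (y : Hc i j l) : Hh l j^* i :=
  castm D erefl (tensU1 (V i))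
    (compc (tensA (V i) (V j) (V j^*)) (tensm (idm (V i)) (dv P j)) (tensm y (idm (V j^*)))).

(* components of Ax and Bx (each component receives exactly one term of the sum) *)
Definition ahA (x : Hsp) (a b c : I) : Hh a b c :=
  cHh1 (star_invol P a) (TA_c (xc x a^* c b)).
Definition acA (x : Hsp) (a b c : I) : Hc a b c :=
  cHc1 (star_invol P a) (TA_h (xh x a^* c b)).
Definition ahB (x : Hsp) (a b c : I) : Hh a b c :=
  cHh2 (star_invol P b) (TB_c (xc x c b^* a)).
Definition acB (x : Hsp) (a b c : I) : Hc a b c :=
  cHc2 (star_invol P b) (TB_h (xh x c b^* a)).

Variable HC : smcat_axioms D.

Lemma castm0 (U U' W W' : Ob D) (e1 : U = U') (e2 : W = W') :
  castm D e1 e2 (0 : Hom D U W) = 0.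
Proof. by case: W' / e2; case: U' / e1. Qed.

Lemma comp0l (U W X : Ob D) (f : Hom D U W) : comp (0 : Hom D W X) f = 0.
Proof. by rewrite -(scale0r (0 : Hom D W X)) (compZl HC) scale0r. Qed.

Lemma comp0r (U W X : Ob D) (g : Hom D W X) : comp g (0 : Hom D U W) = 0.
Proof. by rewrite -(scale0r (0 : Hom D U W)) (compZr HC) scale0r. Qed.

Lemma tensm0l (U W U' W' : Ob D) (g : Hom D W W') : tensm (0 : Hom D U U') g = 0.
Proof. by rewrite -(scale0r (0 : Hom D U U')) (tensmZl HC) scale0r. Qed.

Lemma tensm0r (U W U' W' : Ob D) (f : Hom D U U') : tensm f (0 : Hom D W W') = 0.
Proof. by rewrite -(scale0r (0 : Hom D W W')) (tensmZr HC) scale0r. Qed.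

Lemma compc0 (U W1 W2 X : Ob D) (e : W1 = W2) (g : Hom D W2 X) :
  compc e g (0 : Hom D U W1) = 0.
Proof. by rewrite /compc castm0 comp0r. Qed.

Lemma compc0l (U W1 W2 X : Ob D) (e : W1 = W2) (f : Hom D U W1) :
  compc e (0 : Hom D W2 X) f = 0.
Proof. by rewrite /compc comp0l. Qed.

Lemma TA_h0 i j l : TA_h (0 : Hh i j l) = 0.
Proof. by rewrite /TA_h tensm0r compc0l castm0. Qed.
Lemma TA_c0 i j l : TA_c (0 : Hc i j l) = 0.
Proof. by rewrite /TA_c tensm0r compc0 castm0. Qed.
Lemma TB_h0 i j l : TB_h (0 : Hh i j l) = 0.
Proof. by rewrite /TB_h tensm0l compc0l castm0. Qed.
Lemma TB_c0 i j l : TB_c (0 : Hc i j l) = 0.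
Proof. by rewrite /TB_c tensm0l compc0 castm0. Qed.

Lemma cHh1_0 (a a' : I) (e : a = a') b c : cHh1 e (0 : Hh a b c) = 0.
Proof. by case: a' / e. Qed.
Lemma cHc1_0 (a a' : I) (e : a = a') b c : cHc1 e (0 : Hc a b c) = 0.
Proof. by case: a' / e. Qed.
Lemma cHh2_0 (b b' : I) (e : b = b') a c : cHh2 e (0 : Hh a b c) = 0.
Proof. by case: b' / e. Qed.
Lemma cHc2_0 (b b' : I) (e : b = b') a c : cHc2 e (0 : Hc a b c) = 0.
Proof. by case: b' / e. Qed.

Lemma opA_fin (x : Hsp) : exists s : seq I, forall a b c : I,
  ~~ [&& a \in s, b \in s & c \in s] -> ahA x a b c = 0 /\ acA x a b c = 0.
Proof.
case: (xfin x) => s hs; exists (s ++ map (star P) s) => a b c hn.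
have [h1 h2] : xh x a^* c b = 0 /\ xc x a^* c b = 0.
  apply: hs; apply: contra hn => /and3P [sa sc sb].
  rewrite !mem_cat sb sc !orTb !andbT orbC.
  by apply/orP; left; apply/mapP; exists a^* => //; rewrite star_invol.
rewrite /ahA /acA h1 h2 TA_c0 TA_h0.
by rewrite cHh1_0 cHc1_0.
Qed.

Lemma opB_fin (x : Hsp) : exists s : seq I, forall a b c : I,
  ~~ [&& a \in s, b \in s & c \in s] -> ahB x a b c = 0 /\ acB x a b c = 0.
Proof.
case: (xfin x) => s hs; exists (s ++ map (star P) s) => a b c hn.
have [h1 h2] : xh x c b^* a = 0 /\ xc x c b^* a = 0.
  apply: hs; apply: contra hn => /and3P [sc sb sa].
  rewrite !mem_cat sa sc !orTb !andbT /= orbC.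
  by apply/orP; left; apply/mapP; exists b^* => //; rewrite star_invol.
rewrite /ahB /acB h1 h2 TB_c0 TB_h0.
by rewrite cHh2_0 cHc2_0.
Qed.

Definition opA (x : Hsp) : Hsp := @MkH (ahA x) (acA x) (opA_fin x).
Definition opB (x : Hsp) : Hsp := @MkH (ahB x) (acB x) (opB_fin x).

End Psi.

(* A and B are involutions by the zig-zag identities, and the form <,> is symmetric
   and, by the domination axiom (4), nondegenerate; so transposes are unique and
   A^T, B^T are involutions too.  The key identity is <ABA x, y> = <x, BAB y>:
   componentwise it says that the trace <g f> of f in H^{ij}_k and g in H^k_{ij}
   does not change when f and g are rotated three times by A and B, which is a
   string-diagram computation ending in a zig-zag.  It gives A^T B^T A^T = BAB and,
   transposing, B^T A^T B^T = ABA; every identity of the statement then follows by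
   rewriting words in A, B, A^T, B^T, e.g. C^T = (B^T A^T)^3 = (ABA)(BAB) = C.
   Grading is read off from the degrees of A and B and, via nondegeneracy, of
   A^T and B^T. *)

From Pilot Require Import Defs.
From HB Require Import structures.
From mathcomp Require Import all_boot all_algebra.
From Stdlib Require Import ProofIrrelevance ClassicalEpsilon Eqdep.
From Stdlib Require Import FunctionalExtensionality Classical.
Set Implicit Arguments.
Unset Strict Implicit.
Unset Printing Implicit Defensive.
Import GRing.Theory.
Local Open Scope ring_scope.

Section SeqSums.
Variables (R : nmodType) (I : eqType).

Lemma big_seq_sub (t u : seq I) (G : I -> R) : uniq t -> uniq u -> {subset t <= u} ->
  (forall i, i \notin t -> G i = 0) -> \sum_(i <- u) G i = \sum_(i <- t) G i.
Proof.
move=> ut uu tu hG.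
rewrite (bigID (fun i => i \in t)) /= [X in _ + X]big1 ?addr0; last by move=> i /hG.
rewrite -big_filter; apply: perm_big; apply: uniq_perm; rewrite ?filter_uniq //.
by move=> i; rewrite mem_filter; case: (boolP (i \in t)) => //= /tu ->.
Qed.

Lemma big3_seq_sub (t u : seq I) (F : I -> I -> I -> R) : uniq t -> uniq u -> {subset t <= u} ->
  (forall i j l, ~~ [&& i \in t, j \in t & l \in t] -> F i j l = 0) ->
  \sum_(i <- u) \sum_(j <- u) \sum_(l <- u) F i j l =
  \sum_(i <- t) \sum_(j <- t) \sum_(l <- t) F i j l.
Proof.
move=> ut uu tu hF.
rewrite (@big_seq_sub t u) //; last first.
  by move=> i hi; rewrite big1 // => j _; rewrite big1 // => l _; apply: hF; rewrite (negPf hi).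
apply: eq_bigr => i _; rewrite (@big_seq_sub t u) //; last first.
  by move=> j hj; rewrite big1 // => l _; apply: hF; rewrite (negPf hj) andbF.
apply: eq_bigr => j _; rewrite (@big_seq_sub t u) //.
by move=> l hl; apply: hF; rewrite (negPf hl) !andbF.
Qed.

Lemma big3_seq1 (s : seq I) (F : I -> I -> I -> R) i0 j0 l0 : uniq s ->
  i0 \in s -> j0 \in s -> l0 \in s ->
  (forall i j l, (i, j, l) != (i0, j0, l0) -> F i j l = 0) ->
  \sum_(i <- s) \sum_(j <- s) \sum_(l <- s) F i j l = F i0 j0 l0.
Proof.
move=> us hi hj hl hF.
rewrite (bigD1_seq i0) //= [X in _ + X]big1 ?addr0; last first.
  move=> i /negPf ne; rewrite big1 // => j _; rewrite big1 // => l _.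
  by apply: hF; rewrite !xpair_eqE ne.
rewrite (bigD1_seq j0) //= [X in _ + X]big1 ?addr0; last first.
  move=> j /negPf ne; rewrite big1 // => l _.
  by apply: hF; rewrite !xpair_eqE ne andbF.
rewrite (bigD1_seq l0) //= [X in _ + X]big1 ?addr0 // => l /negPf ne.
by apply: hF; rewrite !xpair_eqE ne !andbF.
Qed.

Lemma big_seq_reindex_invol (s : seq I) (f : I -> I) (G : I -> R) : uniq s -> involutive f ->
  (forall i, i \in s -> f i \in s) -> \sum_(i <- s) G (f i) = \sum_(i <- s) G i.
Proof.
move=> us finv hs; rewrite -(big_map f xpredT G); apply: perm_big; apply: uniq_perm => //.
  by rewrite map_inj_uniq //; apply: inv_inj.
move=> i; apply/mapP/idP => [[j hj ->]|hi]; first exact: hs.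
by exists (f i); [exact: hs | rewrite finv].
Qed.

End SeqSums.

(** * Words in two involutions and their transposes *)

Section InvolutionRelations.
Variables (X : Type) (a b a' b' : X -> X).
Hypotheses (aK : involutive a) (bK : involutive b) (a'K : involutive a') (b'K : involutive b').
Hypothesis rel_a' : forall x, a' (b' (a' x)) = b (a (b x)).
Hypothesis rel_b' : forall x, b' (a' (b' x)) = a (b (a x)).

Lemma a_R_a x : a (b' (b (a x))) = a (a' (b' (b (b (a (b (a (b (a x))))))))).
Proof. by rewrite bK -rel_b' b'K a'K. Qed.

Lemma b_L_b x : b (a' (a (b x))) = b (b' (a' (a (a (b (a (b (a (b x))))))))).
Proof. by rewrite aK -rel_a' a'K b'K. Qed.

Lemma ABcube_eq x : a (b (a (b (a (b x))))) = b' (a' (b' (a' (b' (a' x))))).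
Proof. by rewrite -rel_b' -rel_a'. Qed.

Lemma L_C_Linv x : a' (a (a (b (a (b (a (b (a (a' x))))))))) = a (b (a (b (a (b x))))).
Proof. by rewrite aK -rel_a' a'K -rel_b' ABcube_eq. Qed.

Lemma R_C_Rinv x : b' (b (a (b (a (b (a (b (b (b' x))))))))) = a (b (a (b (a (b x))))).
Proof. by rewrite bK -rel_a' -rel_b' b'K ABcube_eq. Qed.

End InvolutionRelations.

Section Adjoints.
Variables (X T : Type) (fm : X -> X -> T).
Hypothesis fm_sym : forall x y, fm x y = fm y x.
Hypothesis fm_nondeg : forall z z', (forall y, fm z y = fm z' y) -> z = z'.

Definition adjoint (f g : X -> X) := forall x y, fm (f x) y = fm x (g y).

Lemma adjoint_sym f g : adjoint f g -> adjoint g f.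
Proof. by move=> h x y; rewrite fm_sym -h fm_sym. Qed.

Lemma adjoint_comp f g f' g' : adjoint f g -> adjoint f' g' -> adjoint (f \o f') (g' \o g).
Proof. by move=> h h' x y; rewrite /= h h'. Qed.

Lemma adjoint_eq f g g' : adjoint f g -> adjoint f g' -> g =1 g'.
Proof. by move=> h h' y; apply: fm_nondeg => z; rewrite fm_sym -h h' fm_sym. Qed.

Lemma adjoint_involutive f g : involutive f -> adjoint f g -> involutive g.
Proof.
move=> fK h; apply: (adjoint_eq (adjoint_comp h h)) => x y.
by rewrite /= fK.
Qed.

Section OperatorIdentities.
Variables (a b a' b' : X -> X).
Hypotheses (aK : involutive a) (bK : involutive b).
Hypotheses (ha : adjoint a a') (hb : adjoint b b').
Hypothesis hABA : adjoint (a \o b \o a) (b \o a \o b).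

Theorem adjoint_involution_identities :
  let L := a' \o a in
  let R := b' \o b in
  let C := (a \o b) \o (a \o b) \o (a \o b) in
  [/\ adjoint L L, adjoint R R & adjoint C C] /\
  exists Linv Rinv Cinv : X -> X,
    [/\ cancel L Linv /\ cancel Linv L, cancel R Rinv /\ cancel Rinv R
      & cancel C Cinv /\ cancel Cinv C] /\
    (forall x, a (C (a x)) = Cinv x) /\ (forall x, b (C (b x)) = Cinv x) /\
    (forall x, L (C (Linv x)) = C x) /\ (forall x, R (C (Rinv x)) = C x) /\
    (forall x, a (L (a x)) = Linv x) /\ (forall x, b (R (b x)) = Rinv x) /\
    (forall x, a (R (a x)) = Linv (R (Cinv x))) /\
    (forall x, b (L (b x)) = Rinv (L (C x))).
Proof.
move=> L R C; rewrite {}/L {}/R {}/C.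
have a'K := adjoint_involutive aK ha.
have b'K := adjoint_involutive bK hb.
have rel_a' : forall x, a' (b' (a' x)) = b (a (b x)).
  exact: adjoint_eq (adjoint_comp (adjoint_comp ha hb) ha) hABA.
have rel_b' : forall x, b' (a' (b' x)) = a (b (a x)).
  exact: adjoint_eq (adjoint_comp (adjoint_comp hb ha) hb) (adjoint_sym hABA).
split.
  split; [exact: adjoint_comp (adjoint_sym ha) ha | exact: adjoint_comp (adjoint_sym hb) hb |].
  by move=> x y; rewrite /= ha hb ha hb ha hb -(@ABcube_eq _ a b a' b' rel_a' rel_b').
exists (a \o a'), (b \o b'), (b \o a \o b \o a \o b \o a).
split; first by split; split => x /=; rewrite ?(aK, bK, a'K, b'K).
repeat split.
- by move=> x /=; rewrite ?(aK, bK).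
- by move=> x /=; rewrite ?(aK, bK).
- exact: (L_C_Linv aK a'K rel_a' rel_b').
- exact: (R_C_Rinv bK b'K rel_a' rel_b').
- by move=> x /=; rewrite aK.
- by move=> x /=; rewrite bK.
- exact: (a_R_a bK a'K b'K rel_b').
- exact: (b_L_b aK a'K b'K rel_a').
Qed.

End OperatorIdentities.
End Adjoints.

(** * Packed morphisms of a strict monoidal category *)

Section StringDiagrams.
Variables (k : fieldType) (D : smcat_data k) (HC : smcat_axioms D).

(* Morphisms packed with their source and target, so that string-diagram
   manipulations need no transport along the strictness equalities.
   Composing mismatched morphisms yields the junk value 0. *)
Definition Mor := {p : Ob D * Ob D & Defs.Hom D p.1 p.2}.
Definition pack {U W : Ob D} (f : Defs.Hom D U W) : Mor :=
  existT (fun p => Defs.Hom D p.1 p.2) (U, W) f.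
Definition src (F : Mor) := (projT1 F).1.
Definition tgt (F : Mor) := (projT1 F).2.
Definition mcomp (F G : Mor) : Mor :=
  existT (fun p => Defs.Hom D p.1 p.2) (src G, tgt F)
   (match excluded_middle_informative (tgt G = src F) with
    | left e => Defs.comp (projT2 F) (castm D erefl e (projT2 G))
    | right _ => 0 end).
Definition mtens (F G : Mor) : Mor := pack (tensm (projT2 F) (projT2 G)).
Definition mid (X : Ob D) : Mor := pack (idm X).
Definition mscale (c : k) (F : Mor) : Mor := pack (c *: projT2 F).

Local Notation "F <o> G" := (mcomp F G) (at level 50, left associativity).
Local Notation "F <x> G" := (mtens F G) (at level 40, left associativity).

Lemma src_mtens (F G : Mor) : src (F <x> G) = tens (src F) (src G). Proof. by []. Qed.
Lemma tgt_mtens (F G : Mor) : tgt (F <x> G) = tens (tgt F) (tgt G). Proof. by []. Qed.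
Lemma src_mcomp (F G : Mor) : src (F <o> G) = src G. Proof. by []. Qed.
Lemma tgt_mcomp (F G : Mor) : tgt (F <o> G) = tgt F. Proof. by []. Qed.
Lemma src_mid (X : Ob D) : src (mid X) = X. Proof. by []. Qed.
Lemma tgt_mid (X : Ob D) : tgt (mid X) = X. Proof. by []. Qed.
Lemma src_mscale c (F : Mor) : src (mscale c F) = src F. Proof. by []. Qed.
Lemma tgt_mscale c (F : Mor) : tgt (mscale c F) = tgt F. Proof. by []. Qed.
Lemma src_pack (U W : Ob D) (f : Defs.Hom D U W) : src (pack f) = U. Proof. by []. Qed.
Lemma tgt_pack (U W : Ob D) (f : Defs.Hom D U W) : tgt (pack f) = W. Proof. by []. Qed.

Definition mor_endsE := (src_mtens, tgt_mtens, src_mcomp, tgt_mcomp,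
  src_mid, tgt_mid, src_mscale, tgt_mscale).

Lemma mtens_pack (U W U' W' : Ob D) (f : Defs.Hom D U W) (g : Defs.Hom D U' W') :
  pack f <x> pack g = pack (tensm f g).
Proof. by []. Qed.

Lemma packE (F : Mor) : F = pack (projT2 F).
Proof. by case: F => [[U W] f]. Qed.

Lemma pack_castm (U U' W W' : Ob D) (e1 : U = U') (e2 : W = W') (f : Defs.Hom D U W) :
  pack (castm D e1 e2 f) = pack f.
Proof. by case: W' / e2; case: U' / e1. Qed.

Lemma pack_inj (U W : Ob D) (f g : Defs.Hom D U W) : pack f = pack g -> f = g.
Proof. exact: inj_pairT2. Qed.

Lemma pack0 (U U' W W' : Ob D) : U = U' -> W = W' ->
  pack (0 : Defs.Hom D U W) = pack (0 : Defs.Hom D U' W').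
Proof. by move=> -> ->. Qed.

Lemma mcomp_pack (U W X : Ob D) (g : Defs.Hom D W X) (f : Defs.Hom D U W) :
  pack g <o> pack f = pack (Defs.comp g f).
Proof.
rewrite /mcomp /=; case: excluded_middle_informative => [e|[]] //.
by rewrite (proof_irrelevance _ e erefl).
Qed.

Lemma pack_compc (U W1 W2 X : Ob D) (e : W1 = W2) (g : Defs.Hom D W2 X) (f : Defs.Hom D U W1) :
  pack (compc e g f) = pack g <o> pack f.
Proof. by rewrite /compc -(pack_castm erefl e f) mcomp_pack. Qed.

Lemma mcomp_mismatch (F G : Mor) : tgt G <> src F ->
  F <o> G = pack (0 : Defs.Hom D (src G) (tgt F)).
Proof. by rewrite /mcomp; case: excluded_middle_informative. Qed.

Lemma mcomp0l (U X : Ob D) (G : Mor) :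
  pack (0 : Defs.Hom D U X) <o> G = pack (0 : Defs.Hom D (src G) X).
Proof.
rewrite /mcomp; case: excluded_middle_informative => // e.
by rewrite /= (comp0l HC).
Qed.

Lemma mcomp0r (Y W : Ob D) (F : Mor) :
  F <o> pack (0 : Defs.Hom D Y W) = pack (0 : Defs.Hom D Y (tgt F)).
Proof.
rewrite /mcomp; case: excluded_middle_informative => //= e.
by rewrite castm0 (comp0r HC).
Qed.

Lemma mcompA (F G H : Mor) : F <o> G <o> H = F <o> (G <o> H).
Proof.
rewrite [F]packE [G]packE [H]packE.
move: (projT2 F) (projT2 G) (projT2 H).
case: F G H => [[U1 W1] _] [[U2 W2] _] [[U3 W3] _] /= f g h.
have [e2|ne2] := excluded_middle_informative (W2 = U1); last first.
  by rewrite (@mcomp_mismatch (pack f) (pack g)) // mcomp0l (@mcomp_mismatch (pack f)).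
subst.
have [e1|ne1] := excluded_middle_informative (W3 = U2); last first.
  rewrite mcomp_pack (@mcomp_mismatch _ (pack h)) // (@mcomp_mismatch (pack g) (pack h)) //.
  by rewrite mcomp0r.
by subst; rewrite !mcomp_pack (Defs.compA HC).
Qed.

Lemma mcomp1l (F : Mor) : mid (tgt F) <o> F = F.
Proof. by rewrite [F]packE /mid mcomp_pack (comp1m HC). Qed.

Lemma mcomp1r (F : Mor) : F <o> mid (src F) = F.
Proof. by rewrite [F]packE /mid mcomp_pack (compm1 HC). Qed.

Lemma mcomp1l_eq (X : Ob D) (F : Mor) : X = tgt F -> mid X <o> F = F.
Proof. by move=> ->; rewrite mcomp1l. Qed.

Lemma mcomp1r_eq (X : Ob D) (F : Mor) : X = src F -> F <o> mid X = F.
Proof. by move=> ->; rewrite mcomp1r. Qed.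

Lemma mtens_mcomp (F G F' G' : Mor) : tgt G = src F -> tgt G' = src F' ->
  (F <o> G) <x> (F' <o> G') = (F <x> F') <o> (G <x> G').
Proof.
case: F G F' G' => [[U1 W1] f] [[U2 W2] g] [[U3 W3] f'] [[U4 W4] g'].
rewrite /tgt /src /= => e e'; move: f g f' g'; rewrite /= => f g f' g'; subst.
change ((pack f <o> pack g) <x> (pack f' <o> pack g') =
   (pack f <x> pack f') <o> (pack g <x> pack g')).
by rewrite !mcomp_pack ?mtens_pack (tensm_comp HC).
Qed.

Lemma mtensA (F G H : Mor) : F <x> G <x> H = F <x> (G <x> H).
Proof.
case: F G H => [[U1 W1] f] [[U2 W2] g] [[U3 W3] h].
change (pack f <x> pack g <x> pack h = pack f <x> (pack g <x> pack h)).
by rewrite !mtens_pack -(tensmA HC) pack_castm.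
Qed.

Lemma mtens1l (F : Mor) : mid (unitO D) <x> F = F.
Proof.
case: F => [[U W] f]; change (mid (unitO D) <x> pack f = pack f).
by rewrite /mid mtens_pack -{2}(tensm1l HC f) pack_castm.
Qed.

Lemma mtens1r (F : Mor) : F <x> mid (unitO D) = F.
Proof.
case: F => [[U W] f]; change (pack f <x> mid (unitO D) = pack f).
by rewrite /mid mtens_pack -{2}(tensm1r HC f) pack_castm.
Qed.

Lemma mtens_id (X Y : Ob D) : mid X <x> mid Y = mid (tens X Y).
Proof. by rewrite /mtens /mid /= (tensm_id HC). Qed.

Lemma mcompZl c (F G : Mor) : mscale c F <o> G = mscale c (F <o> G).
Proof.
rewrite /mcomp /mscale /pack /=; case: excluded_middle_informative => e.
  by rewrite (compZl HC).
by rewrite scaler0.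
Qed.

Lemma mcompZr c (F G : Mor) : F <o> mscale c G = mscale c (F <o> G).
Proof.
case: F G => [[U1 W1] f] [[U2 W2] g].
rewrite /mcomp /mscale /pack /=; case: excluded_middle_informative => e.
  move: e; rewrite /tgt /src /= => e; move: f g; rewrite /= => f g; subst.
  by rewrite /= (compZr HC).
by rewrite scaler0.
Qed.

Lemma mtensZl c (F G : Mor) : mscale c F <x> G = mscale c (F <x> G).
Proof. by rewrite /mtens /mscale /= (tensmZl HC). Qed.

Lemma mtensZr c (F G : Mor) : F <x> mscale c G = mscale c (F <x> G).
Proof. by rewrite /mtens /mscale /= (tensmZr HC). Qed.

Lemma mcomp_idid (X : Ob D) : mid X <o> mid X = mid X.
Proof. exact: (mcomp1l (mid X)). Qed.

Lemma mtens_idl_mcomp (X : Ob D) (F G : Mor) : tgt G = src F ->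
  mid X <x> (F <o> G) = (mid X <x> F) <o> (mid X <x> G).
Proof. by move=> e; rewrite -mtens_mcomp // mcomp_idid. Qed.

Lemma mtens_idr_mcomp (X : Ob D) (F G : Mor) : tgt G = src F ->
  (F <o> G) <x> mid X = (F <x> mid X) <o> (G <x> mid X).
Proof. by move=> e; rewrite -mtens_mcomp // mcomp_idid. Qed.

Lemma mtens_sep_l (F G : Mor) (X Y : Ob D) : X = src F -> Y = tgt G ->
  (F <x> mid Y) <o> (mid X <x> G) = F <x> G.
Proof. by move=> -> ->; rewrite -mtens_mcomp // mcomp1r mcomp1l. Qed.

Lemma mtens_sep_r (F G : Mor) (X Y : Ob D) : X = tgt F -> Y = src G ->
  (mid X <x> G) <o> (F <x> mid Y) = F <x> G.
Proof. by move=> -> ->; rewrite -mtens_mcomp // mcomp1r mcomp1l. Qed.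

(** * Rotations in a Psi-system *)

Section PsiSystem.
Variables (I : choiceType) (P : psi_data D I) (HP : is_psi_system P).

Local Notation V := (Vo P).
Local Notation "i ^*" := (star P i).

Definition pb i : Mor := pack (bv P i).
Definition pd i : Mor := pack (dv P i).
Definition pV i : Mor := mid (V i).

Lemma src_pb i : src (pb i) = unitO D. Proof. by []. Qed.
Lemma tgt_pb i : tgt (pb i) = tens (V i) (V i^*). Proof. by []. Qed.
Lemma src_pd i : src (pd i) = tens (V i) (V i^*). Proof. by []. Qed.
Lemma tgt_pd i : tgt (pd i) = unitO D. Proof. by []. Qed.
Lemma src_pV i : src (pV i) = V i. Proof. by []. Qed.
Lemma tgt_pV i : tgt (pV i) = V i. Proof. by []. Qed.

Ltac obj_eq :=
  rewrite ?mor_endsE ?src_pb ?tgt_pb ?src_pd ?tgt_pd ?src_pV ?tgt_pV ?src_pack ?tgt_pack;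
  repeat match goal with
  | H : src ?X = _ |- context [src ?X] => rewrite H
  | H : tgt ?X = _ |- context [tgt ?X] => rewrite H
  end;
  rewrite ?tensA ?tens1U ?tensU1 ?(star_invol P) ?tensA ?tens1U ?tensU1.

Lemma mzig i : (pV i <x> pd i^*) <o> (pb i <x> pV i) = pV i.
Proof. by have := f_equal (fun f => pack f) (psi_zig HP i); rewrite /zig pack_castm pack_compc. Qed.

Lemma mzag i : (pd i <x> pV i) <o> (pV i <x> pb i^*) = pV i.
Proof. by have := f_equal (fun f => pack f) (psi_zag HP i); rewrite /zag pack_castm pack_compc. Qed.

Definition mA_h i j (Y : Mor) := (pV i^* <x> Y) <o> (pb i^* <x> pV j).
Definition mA_c i j (Y : Mor) := (pd i^* <x> pV j) <o> (pV i^* <x> Y).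
Definition mB_h i j (Y : Mor) := (Y <x> pV j^*) <o> (pV i <x> pb j).
Definition mB_c i j (Y : Mor) := (pV i <x> pd j) <o> (Y <x> pV j^*).

Lemma pack_TA_h i j l (y : Hh P i j l) : pack (TA_h y) = mA_h i j (pack y).
Proof. by rewrite /TA_h pack_castm pack_compc. Qed.
Lemma pack_TA_c i j l (y : Hc P i j l) : pack (TA_c y) = mA_c i j (pack y).
Proof. by rewrite /TA_c pack_castm pack_compc. Qed.
Lemma pack_TB_h i j l (y : Hh P i j l) : pack (TB_h y) = mB_h i j (pack y).
Proof. by rewrite /TB_h pack_castm pack_compc. Qed.
Lemma pack_TB_c i j l (y : Hc P i j l) : pack (TB_c y) = mB_c i j (pack y).
Proof. by rewrite /TB_c pack_castm pack_compc. Qed.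

Lemma mA_hK i j l (X : Mor) : src X = tens (V i) (V j) -> tgt X = V l ->
  mA_c i^* l (mA_h i j X) = X.
Proof.
move=> hs ht; rewrite /mA_c /mA_h !(star_invol P).
rewrite mtens_idl_mcomp; last by obj_eq.
rewrite -mcompA -mtensA mtens_id (@mtens_sep_l (pd i) X); try by obj_eq.
rewrite -(@mtens_sep_r (pd i) X (unitO D) (tens (V i) (V j))); try by obj_eq.
rewrite mtens1l mcompA -(mtens_id (V i) (V j)) -!mtensA -mtens_mcomp; try by obj_eq.
by rewrite mzag mcomp_idid mtens_id mcomp1r_eq; last by obj_eq.
Qed.

Lemma mA_cK i j l (X : Mor) : src X = V l -> tgt X = tens (V i) (V j) ->
  mA_h i^* l (mA_c i j X) = X.
Proof.
move=> hs ht; rewrite /mA_h /mA_c !(star_invol P).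
rewrite mtens_idl_mcomp; last by obj_eq.
rewrite mcompA -[mid (V i) <x> (pV i^* <x> X)]mtensA mtens_id (@mtens_sep_r (pb i) X);
  try by obj_eq.
rewrite -(@mtens_sep_l (pb i) X (unitO D) (tens (V i) (V j))); try by obj_eq.
rewrite mtens1l -mcompA -(mtens_id (V i) (V j)) -!mtensA -mtens_mcomp; try by obj_eq.
by rewrite mzig mcomp_idid mtens_id mcomp1l_eq; last by obj_eq.
Qed.

Lemma mB_hK i j l (X : Mor) : src X = tens (V i) (V j) -> tgt X = V l ->
  mB_c l j^* (mB_h i j X) = X.
Proof.
move=> hs ht; rewrite /mB_c /mB_h !(star_invol P).
rewrite mtens_idr_mcomp; last by obj_eq.
rewrite -mcompA mtensA mtens_id (@mtens_sep_r X (pd j^*)); try by obj_eq.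
rewrite -(@mtens_sep_l X (pd j^*) (tens (V i) (V j)) (unitO D)); try by obj_eq.
rewrite mtens1r mcompA -(mtens_id (V i) (V j)) !mtensA -mtens_mcomp; try by obj_eq.
by rewrite mzig mcomp_idid mtens_id mcomp1r_eq; last by obj_eq.
Qed.

Lemma mB_cK i j l (X : Mor) : src X = V l -> tgt X = tens (V i) (V j) ->
  mB_h l j^* (mB_c i j X) = X.
Proof.
move=> hs ht; rewrite /mB_h /mB_c !(star_invol P).
rewrite mtens_idr_mcomp; last by obj_eq.
rewrite mcompA [(X <x> _) <x> _]mtensA mtens_id (@mtens_sep_l X (pb j^*)); try by obj_eq.
rewrite -(@mtens_sep_r X (pb j^*) (tens (V i) (V j)) (unitO D)); try by obj_eq.
rewrite mtens1r -mcompA -(mtens_id (V i) (V j)) !mtensA -mtens_mcomp; try by obj_eq.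
by rewrite mzag mcomp_idid mtens_id mcomp1l_eq; last by obj_eq.
Qed.

(* [mdual z F] is the dual map of [F : V_z -> V_z], an endomorphism of [V_z^*];
   [mpair] joins [U] and [W] along their x-strands. *)
Definition mdual z (F : Mor) :=
  (pV z^* <x> pd z) <o> ((pV z^* <x> F <x> pV z^*) <o> (pb z^* <x> pV z^*)).
Definition mpair x y z (U W : Mor) :=
  (pd x <x> pV z) <o> ((U <x> W) <o> (pV z <x> pb y^*)).

Lemma mdual_scale z c : mdual z (mscale c (pV z)) = mscale c (pV z^*).
Proof.
rewrite /mdual mtensZr mtensZl mcompZl mcompZr !mtens_id mcomp1l_eq; last by obj_eq.
by have := mzig z^*; rewrite (star_invol P) => ->.
Qed.

Lemma mpair_rot x y z (f : Hc P x y z) (g : Hh P x y z) :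
  mpair x y z (mB_c x y (pack f)) (mA_h x y (pack g)) = pack (Defs.comp g f).
Proof.
rewrite /mpair.
rewrite -(@mtens_sep_r (mB_c x y (pack f)) (mA_h x y (pack g)) (V x) (V y)); try by obj_eq.
rewrite !mcompA /mB_c mtens_idr_mcomp; last by obj_eq.
rewrite mcompA [(pack f <x> pV y^*) <x> pV y]mtensA mtens_id.
rewrite (@mtens_sep_l (pack f) (pb y^*)); try by obj_eq.
rewrite -(@mtens_sep_r (pack f) (pb y^*) (tens (V x) (V y)) (unitO D)); try by obj_eq.
rewrite mtens1r [(pV x <x> pd y) <x> pV y]mtensA -(mtens_id (V x) (V y)) mtensA.
rewrite -[_ <o> (_ <o> pack f)]mcompA -[(pV x <x> _) <o> (mid (V x) <x> _)]mtens_mcomp;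
  try by obj_eq.
rewrite mzag mcomp_idid mtens_id (mcomp1l (pack f)).
rewrite /mA_h mtens_idl_mcomp; last by obj_eq.
rewrite !mcompA -[(pd x <x> pV z) <o> _]mcompA -[pV x <x> (pV x^* <x> pack g)]mtensA mtens_id.
rewrite (@mtens_sep_l (pd x) (pack g)); try by obj_eq.
rewrite -(@mtens_sep_r (pd x) (pack g) (unitO D) (tens (V x) (V y))); try by obj_eq.
rewrite mtens1l mcompA -(mtens_id (V x) (V y)) -[pd x <x> (_ <x> _)]mtensA.
rewrite -[pV x <x> (pb x^* <x> _)]mtensA.
rewrite -[_ <o> (_ <o> pack f)]mcompA -[(pd x <x> _ <x> _) <o> _]mtens_mcomp; try by obj_eq.
by rewrite mzag mcomp_idid mtens_id (mcomp1l (pack f)) mcomp_pack.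
Qed.

Section Rotations.
Variables (x y z : I) (U W : Mor).
Hypotheses (hUs : src U = tens (V z) (V y^*)) (hUt : tgt U = V x).
Hypotheses (hWs : src W = V y) (hWt : tgt W = tens (V x^*) (V z)).

Lemma mrot_mcompE :
  mB_c z^* x (mA_h z y^* U) <o> mA_h y z^* (mB_c x^* z W) =
  (pV z^* <x> pd z) <o> ((pV z^* <x> pd x <x> mid (tens (V z) (V z^*))) <o>
  ((pV z^* <x> U <x> mid (V x^*) <x> mid (tens (V z) (V z^*))) <o>
  ((mid (tens (V z^*) (V z)) <x> (mid (V y^*) <x> (W <x> pV z^*))) <o>
  ((mid (tens (V z^*) (V z)) <x> (pb y^* <x> pV z^*)) <o> (pb z^* <x> pV z^*))))).
Proof.
set rhs := (X in _ = X).
rewrite /mB_c /mA_h.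
rewrite mtens_idr_mcomp; last by obj_eq.
rewrite mtens_idl_mcomp; last by obj_eq.
rewrite !mcompA.
rewrite [(pb z^* <x> pV y^*) <x> _]mtensA -[mid (V y^*) <x> (pV x^* <x> pd z)]mtensA !mtens_id.
rewrite -[mid (tens (V y^*) (V x^*)) <x> pd z]mtens1l.
rewrite -[_ <o> (mid (unitO D) <x> _ <o> _)]mcompA.
rewrite (@mtens_sep_l (pb z^*) (mid (tens (V y^*) (V x^*)) <x> pd z)); try by obj_eq.
rewrite -(@mtens_sep_r (pb z^*) (mid (tens (V y^*) (V x^*)) <x> pd z) (tens (V z^*) (V z))
   (tens (tens (V y^*) (V x^*)) (tens (V z) (V z^*)))); try by obj_eq.
rewrite [(_ <o> (pb z^* <x> _)) <o> _]mcompA.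
rewrite -[(pb z^* <x> _) <o> (_ <o> (pb y^* <x> _))]mcompA.
rewrite -[mid (V y^*) <x> (W <x> pV z^*)]mtens1l.
rewrite (@mtens_sep_l (pb z^*) (mid (V y^*) <x> (W <x> pV z^*))); try by obj_eq.
rewrite -(@mtens_sep_r (pb z^*) (mid (V y^*) <x> (W <x> pV z^*)) (tens (V z^*) (V z))
  (tens (V y^*) (tens (V y) (V z^*)))); try by obj_eq.
rewrite [(_ <o> (pb z^* <x> mid (tens (V y^*) _))) <o> _]mcompA.
rewrite -[pb y^* <x> pV z^*]mtens1l (@mtens_sep_l (pb z^*) (pb y^* <x> pV z^*)); try by obj_eq.
rewrite -(@mtens_sep_r (pb z^*) (pb y^* <x> pV z^*) (tens (V z^*) (V z)) (V z^*)); try by obj_eq.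
rewrite -[(pV z^* <x> U <x> mid (V x^*)) <o> _]mcompA.
rewrite -[mid (tens (V z^*) (V z)) <x> (mid (tens (V y^*) (V x^*)) <x> pd z)]mtensA mtens_id.
rewrite -[pV z^* <x> U <x> mid (V x^*)]mtens1r.
rewrite (@mtens_sep_l (pV z^* <x> U <x> mid (V x^*)) (pd z)); try by obj_eq.
rewrite -(@mtens_sep_r (pV z^* <x> U <x> mid (V x^*)) (pd z) (tens (tens (V z^*) (V x)) (V x^*))
  (tens (V z) (V z^*))); try by obj_eq.
rewrite mcompA -[(pV z^* <x> pd x) <o> _]mcompA -[pV z^* <x> pd x]mtens1r.
rewrite (@mtens_sep_l (pV z^* <x> pd x) (pd z)); try by obj_eq.
rewrite -(@mtens_sep_r (pV z^* <x> pd x) (pd z) (V z^*) (tens (V z) (V z^*))); try by obj_eq.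
by rewrite /rhs !mcompA.
Qed.

Lemma mrot_mcomp :
  mB_c z^* x (mA_h z y^* U) <o> mA_h y z^* (mB_c x^* z W) = mdual z (mpair x y z U W).
Proof.
rewrite mrot_mcompE /mdual /mpair.
rewrite mtens_idl_mcomp; last by obj_eq.
rewrite mtens_idr_mcomp; last by obj_eq.
rewrite mtens_idl_mcomp; last by obj_eq.
rewrite mtens_idr_mcomp; last by obj_eq.
have -> : pV z^* <x> pd x <x> mid (tens (V z) (V z^*)) = pV z^* <x> (pd x <x> pV z) <x> pV z^*.
  by rewrite -mtens_id !mtensA.
have -> : mid (tens (V z^*) (V z)) <x> (pb y^* <x> pV z^*) =
          pV z^* <x> (pV z <x> pb y^*) <x> pV z^*.
  by rewrite -mtens_id !mtensA.
have <- : (pV z^* <x> U <x> mid (V x^*) <x> mid (tens (V z) (V z^*))) <o>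
   (mid (tens (V z^*) (V z)) <x> (mid (V y^*) <x> (W <x> pV z^*))) =
   pV z^* <x> (U <x> W) <x> pV z^*.
  rewrite !mtensA mtens_id -[mid (tens (V z^*) (V z))]mtens_id mtensA.
  rewrite -[mid (V z) <x> (mid (V y^*) <x> _)]mtensA mtens_id -mtens_mcomp; try by obj_eq.
  by rewrite mcomp_idid (@mtens_sep_l U (W <x> pV z^*)) //; obj_eq.
by rewrite /pV !mcompA.
Qed.

End Rotations.

Lemma scalE i (f : Defs.Hom D (V i) (V i)) : f = scal HP f *: idm (V i).
Proof. by apply/eqP; rewrite /scal; exact: (xchooseP (simple_exb HP f)). Qed.

Lemma scal_uniq i (f : Defs.Hom D (V i) (V i)) c : f = c *: idm (V i) -> scal HP f = c.
Proof.
move=> hf; have := scalE f; rewrite {1}hf => /eqP; rewrite -subr_eq0 -scalerBl scaler_eq0.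
by rewrite (negPf (psi_simple_neq0 HP i)) orbF subr_eq0 => /eqP ->.
Qed.

Lemma pack_end i (f : Defs.Hom D (V i) (V i)) : pack f = mscale (scal HP f) (pV i).
Proof. by rewrite {1}(scalE f). Qed.

Lemma mscale_inj i (c1 c2 : k) : mscale c1 (pV i) = mscale c2 (pV i) -> c1 = c2.
Proof.
move=> /pack_inj e.
by rewrite -(@scal_uniq i (c1 *: idm (V i)) c1) // (@scal_uniq i (c1 *: idm (V i)) c2).
Qed.

Definition mABA_c i j l X := mA_c j l^* (mB_h i^* l (mA_c i j X)).
Definition mABA_h i j l X := mA_h j l^* (mB_c i^* l (mA_h i j X)).
Definition mBAB_c i j l X := mB_c l^* i (mA_h l j^* (mB_c i j X)).
Definition mBAB_h i j l X := mB_h l^* i (mA_c l j^* (mB_h i j X)).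

Lemma mABA_cK i j l (X : Mor) : src X = V l -> tgt X = tens (V i) (V j) ->
  mABA_h j^* i^* l^* (mABA_c i j l X) = X.
Proof.
move=> hs ht; rewrite /mABA_c /mABA_h (@mA_cK j l^* i^*); try by obj_eq.
rewrite !(star_invol P) (@mB_hK i^* l j); try by obj_eq.
by rewrite (@mA_cK i j l).
Qed.

Lemma mABA_hK i j l (X : Mor) : src X = tens (V i) (V j) -> tgt X = V l ->
  mABA_c j^* i^* l^* (mABA_h i j l X) = X.
Proof.
move=> hs ht; rewrite /mABA_c /mABA_h (@mA_hK j l^* i^*); try by obj_eq.
rewrite !(star_invol P) (@mB_cK i^* l j); try by obj_eq.
by rewrite (@mA_hK i j l).
Qed.

Lemma mBAB_hK i j l (X : Mor) : src X = tens (V i) (V j) -> tgt X = V l ->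
  mBAB_c j^* i^* l^* (mBAB_h i j l X) = X.
Proof.
move=> hs ht; rewrite /mBAB_c /mBAB_h (@mB_hK l^* i j^*); try by obj_eq.
rewrite !(star_invol P) (@mA_cK l j^* i); try by obj_eq.
by rewrite (@mB_hK i j l).
Qed.

(* The heart of (ABA)^T = BAB: the trace of [g f] survives rotating both. *)
Lemma mcomp_BAB_ABA i j l (f : Hc P i j l) (g : Hh P i j l) :
  mBAB_c i j l (pack f) <o> mABA_h i j l (pack g) = mscale (scal HP (Defs.comp g f)) (pV l^*).
Proof.
by rewrite /mBAB_c /mABA_h mrot_mcomp ?mpair_rot ?pack_end ?mdual_scale //; obj_eq.
Qed.

Lemma mcomp_ABA_BAB i j l (f : Hc P i j l) (g : Hh P i j l) :
  mABA_c i j l (pack f) <o> mBAB_h i j l (pack g) = mscale (scal HP (Defs.comp g f)) (pV l^*).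
Proof.
have hf : pack (TA_c (TB_h (TA_c f))) = mABA_c i j l (pack f).
  by rewrite !pack_TA_c pack_TB_h pack_TA_c.
have hg : pack (TB_h (TA_c (TB_h g))) = mBAB_h i j l (pack g).
  by rewrite !pack_TB_h pack_TA_c pack_TB_h.
have := mcomp_BAB_ABA (TB_h (TA_c (TB_h g))) (TA_c (TB_h (TA_c f))).
rewrite hf hg mBAB_hK ?mABA_cK //; try by obj_eq.
rewrite mcomp_pack pack_end (star_invol P) => /mscale_inj ->.
by rewrite -hf -hg mcomp_pack pack_end.
Qed.

(** * The space H, its form, and the operators A and B *)

Local Notation H := (Hsp P).
Local Notation A := (@opA k D I P HC).
Local Notation B := (@opB k D I P HC).
Local Notation fm := (Defs.form HP).

Lemma Hsp_ext (x y : H) : (forall i j l, xh x i j l = xh y i j l) ->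
  (forall i j l, xc x i j l = xc y i j l) -> x = y.
Proof.
case: x y => [hx cx fx] [hy cy fy] /= eh ec.
have ehx : hx = hy by do 3![apply: functional_extensionality_dep => ?].
have ecx : cx = cy by do 3![apply: functional_extensionality_dep => ?].
by subst; rewrite (proof_irrelevance _ fx fy).
Qed.

Lemma scal0 i : scal HP (0 : Defs.Hom D (V i) (V i)) = 0.
Proof. by apply: scal_uniq; rewrite scale0r. Qed.

Definition form_term (x y : H) i j l :=
  scal HP (Defs.comp (xh x i j l) (xc y i j l)) + scal HP (Defs.comp (xh y i j l) (xc x i j l)).

Definition supported_on (s : seq I) (x : H) := forall i j l,
  ~~ [&& i \in s, j \in s & l \in s] -> xh x i j l = 0 /\ xc x i j l = 0.

Lemma supported_on_supp x : supported_on (supp x) x.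
Proof. by rewrite /supp; case: constructive_indefinite_description. Qed.

Lemma supported_on_sub s t x : {subset s <= t} -> supported_on s x -> supported_on t x.
Proof.
move=> st hv i j l hn; apply: hv; apply: contra hn => /and3P [hi hj hl].
by rewrite !st.
Qed.

Lemma supported_on_cat_l s t x : supported_on s x -> supported_on (undup (s ++ t)) x.
Proof. by apply: supported_on_sub => i hi; rewrite mem_undup mem_cat hi. Qed.

Lemma supported_on_cat_r s t x : supported_on t x -> supported_on (undup (s ++ t)) x.
Proof. by apply: supported_on_sub => i hi; rewrite mem_undup mem_cat hi orbT. Qed.

Lemma form_term_out (x y : H) s i j l : supported_on s x ->
  ~~ [&& i \in s, j \in s & l \in s] -> form_term x y i j l = 0.
Proof.
move=> hv hn; rewrite /form_term; case: (hv _ _ _ hn) => -> ->.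
by rewrite (comp0l HC) (comp0r HC) !scal0 addr0.
Qed.

Lemma formE (x y : H) (s : seq I) : uniq s -> supported_on s x ->
  fm x y = \sum_(i <- s) \sum_(j <- s) \sum_(l <- s) form_term x y i j l.
Proof.
move=> us hv; rewrite /Defs.form.
set t := undup (supp x).
have ht : supported_on t x.
  by apply: (@supported_on_sub (supp x)); [move=> i; rewrite mem_undup | exact: supported_on_supp].
rewrite -(@big3_seq_sub _ _ t (undup (t ++ s))) ?undup_uniq //; last 2 first.
- by move=> i hi; rewrite mem_undup mem_cat hi.
- by move=> i j l hn; exact: form_term_out ht hn.
rewrite (@big3_seq_sub _ _ s (undup (t ++ s))) ?undup_uniq //.
- by move=> i hi; rewrite mem_undup mem_cat hi orbT.
- by move=> i j l hn; exact: form_term_out hv hn.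
Qed.

Lemma form_sym (x y : H) : fm x y = fm y x.
Proof.
set s := undup (supp x ++ supp y).
have hx : supported_on s x by apply/supported_on_cat_l/supported_on_supp.
have hy : supported_on s y by apply/supported_on_cat_r/supported_on_supp.
rewrite (formE y (undup_uniq _) hx) (formE x (undup_uniq _) hy).
by apply: eq_bigr => i _; apply: eq_bigr => j _; apply: eq_bigr => l _; rewrite /form_term addrC.
Qed.

Definition star_closure (s : seq I) := undup (s ++ map (star P) s).

Lemma star_closure_sub s : {subset s <= star_closure s}.
Proof. by move=> i hi; rewrite mem_undup mem_cat hi. Qed.

Lemma star_closure_star s i : i \in star_closure s -> i^* \in star_closure s.
Proof.
rewrite !mem_undup !mem_cat => /orP [hi|/mapP [j hj ->]].
  by rewrite map_f ?orbT.
by rewrite (star_invol P) hj.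
Qed.

Lemma mem_star_closure_star s i : (i^* \in star_closure s) = (i \in star_closure s).
Proof. by apply/idP/idP => /star_closure_star //; rewrite (star_invol P). Qed.

Lemma supported_on_A s (x : H) :
  supported_on (star_closure s) x -> supported_on (star_closure s) (A x).
Proof.
move=> hv a b c hn.
have [h1 h2] : xh x a^* c b = 0 /\ xc x a^* c b = 0.
  by apply: hv; apply: contra hn => /and3P [ha hc hb]; rewrite -mem_star_closure_star ha hb hc.
by rewrite /= /ahA /acA h1 h2 (TA_c0 P HC) (TA_h0 P HC) cHh1_0 cHc1_0.
Qed.

Lemma supported_on_B s (x : H) :
  supported_on (star_closure s) x -> supported_on (star_closure s) (B x).
Proof.
move=> hv a b c hn.
have [h1 h2] : xh x c b^* a = 0 /\ xc x c b^* a = 0.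
  apply: hv; apply: contra hn => /and3P [hc hb ha].
  by rewrite -[b \in _]mem_star_closure_star ha hb hc.
by rewrite /= /ahB /acB h1 h2 (TB_c0 P HC) (TB_h0 P HC) cHh2_0 cHc2_0.
Qed.

Lemma pack_cHh1 (a a' : I) (e : a = a') b c (t : Hh P a b c) : pack (cHh1 e t) = pack t.
Proof. by case: a' / e. Qed.
Lemma pack_cHc1 (a a' : I) (e : a = a') b c (t : Hc P a b c) : pack (cHc1 e t) = pack t.
Proof. by case: a' / e. Qed.
Lemma pack_cHh2 (b b' : I) (e : b = b') a c (t : Hh P a b c) : pack (cHh2 e t) = pack t.
Proof. by case: b' / e. Qed.
Lemma pack_cHc2 (b b' : I) (e : b = b') a c (t : Hc P a b c) : pack (cHc2 e t) = pack t.
Proof. by case: b' / e. Qed.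

Lemma pack_xhA (x : H) a b c : pack (xh (A x) a b c) = mA_c a^* c (pack (xc x a^* c b)).
Proof. by rewrite /= /ahA pack_cHh1 pack_TA_c. Qed.
Lemma pack_xcA (x : H) a b c : pack (xc (A x) a b c) = mA_h a^* c (pack (xh x a^* c b)).
Proof. by rewrite /= /acA pack_cHc1 pack_TA_h. Qed.
Lemma pack_xhB (x : H) a b c : pack (xh (B x) a b c) = mB_c c b^* (pack (xc x c b^* a)).
Proof. by rewrite /= /ahB pack_cHh2 pack_TB_c. Qed.
Lemma pack_xcB (x : H) a b c : pack (xc (B x) a b c) = mB_h c b^* (pack (xh x c b^* a)).
Proof. by rewrite /= /acB pack_cHc2 pack_TB_h. Qed.

Lemma opAK : involutive A.
Proof.
move=> x; apply: Hsp_ext => a b c; apply: pack_inj.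
  by rewrite pack_xhA pack_xcA !(star_invol P) mA_hK.
by rewrite pack_xcA pack_xhA !(star_invol P) mA_cK.
Qed.

Lemma opBK : involutive B.
Proof.
move=> x; apply: Hsp_ext => a b c; apply: pack_inj.
  by rewrite pack_xhB pack_xcB !(star_invol P) mB_hK.
by rewrite pack_xcB pack_xhB !(star_invol P) mB_cK.
Qed.

Lemma scal_xhABA (x y : H) i j l :
  scal HP (Defs.comp (xh (A (B (A x))) i j l) (xc y i j l)) =
  scal HP (Defs.comp (xh (B (A (B y))) j^* i^* l^*) (xc x j^* i^* l^*)).
Proof.
have hx : pack (xh (A (B (A x))) i j l) = mABA_c j^* i^* l^* (pack (xc x j^* i^* l^*)).
  by rewrite pack_xhA pack_xcB pack_xhA /mABA_c !(star_invol P).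
have hy : pack (xh (B (A (B y))) j^* i^* l^*) = mBAB_c i j l (pack (xc y i j l)).
  by rewrite pack_xhB pack_xcA pack_xhB /mBAB_c !(star_invol P).
have := mcomp_BAB_ABA (xc y i j l) (xh (A (B (A x))) i j l).
rewrite -hy hx.
have e := @mABA_cK j^* i^* l^* (pack (xc x j^* i^* l^*)) erefl erefl.
rewrite !(star_invol P) in e.
by rewrite e mcomp_pack pack_end => /mscale_inj.
Qed.

Lemma scal_xcABA (x y : H) i j l :
  scal HP (Defs.comp (xh y i j l) (xc (A (B (A x))) i j l)) =
  scal HP (Defs.comp (xh x j^* i^* l^*) (xc (B (A (B y))) j^* i^* l^*)).
Proof.
have hx : pack (xc (A (B (A x))) i j l) = mABA_h j^* i^* l^* (pack (xh x j^* i^* l^*)).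
  by rewrite pack_xcA pack_xhB pack_xcA /mABA_h !(star_invol P).
have hy : pack (xc (B (A (B y))) j^* i^* l^*) = mBAB_h i j l (pack (xh y i j l)).
  by rewrite pack_xcB pack_xhA pack_xcB /mBAB_h !(star_invol P).
have := mcomp_ABA_BAB (xc (A (B (A x))) i j l) (xh y i j l).
rewrite -hy hx.
have e := @mABA_hK j^* i^* l^* (pack (xh x j^* i^* l^*)) erefl erefl.
rewrite !(star_invol P) in e.
by rewrite e mcomp_pack pack_end => /mscale_inj.
Qed.

Lemma form_ABA (x y : H) : fm (A (B (A x))) y = fm x (B (A (B y))).
Proof.
set s := star_closure (supp x ++ supp y).
have hx : supported_on s x.
  apply: (@supported_on_sub (supp x)); last exact: supported_on_supp.
  by move=> i hi; apply: star_closure_sub; rewrite mem_cat hi.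
have hABA : supported_on s (A (B (A x))).
  by apply/supported_on_A/supported_on_B/supported_on_A.
rewrite (formE _ (undup_uniq _) hABA) (formE _ (undup_uniq _) hx).
pose F i j l := form_term x (B (A (B y))) j i l.
have si := star_invol P.
have sc : forall i, i \in s -> i^* \in s by move=> i; apply: star_closure_star.
transitivity (\sum_(i <- s) \sum_(j <- s) \sum_(l <- s) F (star P i) (star P j) (star P l)).
  apply: eq_bigr => i _; apply: eq_bigr => j _; apply: eq_bigr => l _.
  by rewrite /F /form_term scal_xhABA scal_xcABA addrC.
rewrite [RHS]exchange_big /=.
rewrite -(@big_seq_reindex_invol _ _ s (star P) (fun i => \sum_(j <- s) \sum_(l <- s) F i j l))
  ?undup_uniq //.
apply: eq_bigr => i _.
rewrite -(@big_seq_reindex_invol _ _ s (star P) (fun j => \sum_(l <- s) F (star P i) j l))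
  ?undup_uniq //.
apply: eq_bigr => j _.
by rewrite -(@big_seq_reindex_invol _ _ s (star P) (F (star P i) (star P j))) ?undup_uniq.
Qed.

Section Inclusion.
Variables (i0 j0 l0 : I).

Definition delta_c (w : Hc P i0 j0 l0) (i j l : I) : Hc P i j l :=
  match i0 =P i, j0 =P j, l0 =P l with
  | ReflectT e1, ReflectT e2, ReflectT e3 =>
      castm D (f_equal V e3) (f_equal2 tens (f_equal V e1) (f_equal V e2)) w
  | _, _, _ => 0 end.
Definition delta_h (w : Hh P i0 j0 l0) (i j l : I) : Hh P i j l :=
  match i0 =P i, j0 =P j, l0 =P l with
  | ReflectT e1, ReflectT e2, ReflectT e3 =>
      castm D (f_equal2 tens (f_equal V e1) (f_equal V e2)) (f_equal V e3) w
  | _, _, _ => 0 end.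

Lemma delta_c_id w : delta_c w i0 j0 l0 = w.
Proof.
rewrite /delta_c; case: (i0 =P i0) => [e1|[]] //; case: (j0 =P j0) => [e2|[]] //.
case: (l0 =P l0) => [e3|[]] //.
move: (f_equal V e3) (f_equal2 tens (f_equal V e1) (f_equal V e2)) => E1 E2.
by rewrite (proof_irrelevance _ E1 erefl) (proof_irrelevance _ E2 erefl).
Qed.

Lemma delta_h_id w : delta_h w i0 j0 l0 = w.
Proof.
rewrite /delta_h; case: (i0 =P i0) => [e1|[]] //; case: (j0 =P j0) => [e2|[]] //.
case: (l0 =P l0) => [e3|[]] //.
move: (f_equal V e3) (f_equal2 tens (f_equal V e1) (f_equal V e2)) => E1 E2.
by rewrite (proof_irrelevance _ E1 erefl) (proof_irrelevance _ E2 erefl).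
Qed.

Lemma delta_c_ne w i j l : (i, j, l) != (i0, j0, l0) -> delta_c w i j l = 0.
Proof.
rewrite /delta_c; case: (i0 =P i) => [e1|//]; case: (j0 =P j) => [e2|//].
by case: (l0 =P l) => [e3|//]; subst; rewrite eqxx.
Qed.

Lemma delta_h_ne w i j l : (i, j, l) != (i0, j0, l0) -> delta_h w i j l = 0.
Proof.
rewrite /delta_h; case: (i0 =P i) => [e1|//]; case: (j0 =P j) => [e2|//].
by case: (l0 =P l) => [e3|//]; subst; rewrite eqxx.
Qed.

Lemma delta_c_fin (w : Hc P i0 j0 l0) : exists s : seq I, forall i j l : I,
  ~~ [&& i \in s, j \in s & l \in s] -> (0 : Hh P i j l) = 0 /\ delta_c w i j l = 0.
Proof.
exists [:: i0; j0; l0] => i j l hn; split => //; apply: delta_c_ne.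
by apply: contra hn => /eqP [-> -> ->]; rewrite !inE !eqxx !orbT.
Qed.

Lemma delta_h_fin (w : Hh P i0 j0 l0) : exists s : seq I, forall i j l : I,
  ~~ [&& i \in s, j \in s & l \in s] -> delta_h w i j l = 0 /\ (0 : Hc P i j l) = 0.
Proof.
exists [:: i0; j0; l0] => i j l hn; split => //; apply: delta_h_ne.
by apply: contra hn => /eqP [-> -> ->]; rewrite !inE !eqxx !orbT.
Qed.

Definition incl_c (w : Hc P i0 j0 l0) : H :=
  @MkH _ _ _ P (fun _ _ _ => 0) (delta_c w) (delta_c_fin w).
Definition incl_h (w : Hh P i0 j0 l0) : H :=
  @MkH _ _ _ P (delta_h w) (fun _ _ _ => 0) (delta_h_fin w).

Lemma incl_c_in w : in_Hc i0 j0 l0 (incl_c w).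
Proof. by split => // a b c ne; rewrite /= delta_c_ne. Qed.

Lemma incl_h_in w : in_Hh i0 j0 l0 (incl_h w).
Proof. by split => // a b c ne; rewrite /= delta_h_ne. Qed.

Lemma form_incl_c (z : H) w : fm z (incl_c w) = scal HP (Defs.comp (xh z i0 j0 l0) w).
Proof.
set s := undup (supp z ++ [:: i0; j0; l0]).
have hv : supported_on s z by apply/supported_on_cat_l/supported_on_supp.
rewrite (formE _ (undup_uniq _) hv) (@big3_seq1 _ _ _ _ i0 j0 l0)
  ?undup_uniq ?mem_undup ?mem_cat ?inE ?eqxx ?orbT //.
  by rewrite /form_term /= delta_c_id (comp0l HC) scal0 addr0.
by move=> i j l ne; rewrite /form_term /= delta_c_ne // (comp0l HC) (comp0r HC) scal0 addr0.
Qed.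

Lemma form_incl_h (z : H) w : fm z (incl_h w) = scal HP (Defs.comp w (xc z i0 j0 l0)).
Proof.
set s := undup (supp z ++ [:: i0; j0; l0]).
have hv : supported_on s z by apply/supported_on_cat_l/supported_on_supp.
rewrite (formE _ (undup_uniq _) hv) (@big3_seq1 _ _ _ _ i0 j0 l0)
  ?undup_uniq ?mem_undup ?mem_cat ?inE ?eqxx ?orbT //.
  by rewrite /form_term /= delta_h_id (comp0r HC) scal0 add0r.
by move=> i j l ne; rewrite /form_term /= delta_h_ne // (comp0l HC) (comp0r HC) scal0 addr0.
Qed.

End Inclusion.

Lemma comp_sumr (U W X : Ob D) (g : Defs.Hom D W X) (T : Type) (s : seq T)
    (F : T -> Defs.Hom D U W) :
  Defs.comp g (\sum_(p <- s) F p) = \sum_(p <- s) Defs.comp g (F p).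
Proof.
elim: s => [|p s IH]; first by rewrite !big_nil (comp0r HC).
by rewrite !big_cons (compDr HC) IH.
Qed.

Lemma comp_suml (U W X : Ob D) (f : Defs.Hom D U W) (T : Type) (s : seq T)
    (F : T -> Defs.Hom D W X) :
  Defs.comp (\sum_(p <- s) F p) f = \sum_(p <- s) Defs.comp (F p) f.
Proof.
elim: s => [|p s IH]; first by rewrite !big_nil (comp0l HC).
by rewrite !big_cons (compDl HC) IH.
Qed.

Lemma compBl (U W X : Ob D) (g g' : Defs.Hom D W X) (f : Defs.Hom D U W) :
  Defs.comp (g - g') f = Defs.comp g f - Defs.comp g' f.
Proof. by have := compDl HC (g - g') g' f; rewrite subrK => ->; rewrite addrK. Qed.

Lemma compBr (U W X : Ob D) (g : Defs.Hom D W X) (f f' : Defs.Hom D U W) :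
  Defs.comp g (f - f') = Defs.comp g f - Defs.comp g f'.
Proof. by have := compDr HC g (f - f') f'; rewrite subrK => ->; rewrite addrK. Qed.

Lemma scalB i (f f' : Defs.Hom D (V i) (V i)) : scal HP (f - f') = scal HP f - scal HP f'.
Proof. by apply: scal_uniq; rewrite {1}(scalE f) {1}(scalE f') scalerBl. Qed.

Section Domination.
Variables (i j : I).
Hypothesis Hij : exists l, exists x : Hc P i j l, x != 0.

Lemma psi_dom_eq0l (X : Ob D) (f : Defs.Hom D (tens (V i) (V j)) X) :
  (forall l (a : Hc P i j l), Defs.comp f a = 0) -> f = 0.
Proof.
move=> hf; have [s hs] := psi_dom HP Hij.
rewrite -(compm1 HC f) hs comp_sumr big1 // => -[l [a b]] _ /=.
by rewrite (Defs.compA HC) hf (comp0l HC).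
Qed.

Lemma psi_dom_eq0r (X : Ob D) (f : Defs.Hom D X (tens (V i) (V j))) :
  (forall l (b : Hh P i j l), Defs.comp b f = 0) -> f = 0.
Proof.
move=> hf; have [s hs] := psi_dom HP Hij.
rewrite -(comp1m HC f) hs comp_suml big1 // => -[l [a b]] _ /=.
by rewrite -(Defs.compA HC) hf (comp0r HC).
Qed.

End Domination.

Lemma TB_h_eq0 i j l (g : Hh P i j l) : TB_h g = 0 -> g = 0.
Proof.
move=> hg; apply: pack_inj.
rewrite -(@mB_hK i j l (pack g)) // -pack_TB_h -pack_TB_c hg (TB_c0 P HC).
by apply: pack0; rewrite ?(star_invol P).
Qed.

(* B-rotation maps [g] to a nonzero element of H^{l j'}_i (j' the dual of j); a
   morphism of the domination (4) for (l, j') that does not kill it is a nonzero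
   element of H^i_{l j'}, whose B-rotation lies in H^{ij}_l. *)
Lemma Hc_neq0_of_Hh i j l (g : Hh P i j l) : g != 0 ->
  exists l', exists w : Hc P i j l', w != 0.
Proof.
move=> gn0.
have zn0 : TB_h g != 0 by apply: contra gn0 => /eqP /TB_h_eq0 ->.
have [l' [b hb]] : exists l', exists b : Hh P l j^* l', Defs.comp b (TB_h g) != 0.
  apply: NNPP => hn; apply: (negP zn0); apply/eqP.
  apply: (psi_dom_eq0r (ex_intro _ i (ex_intro _ (TB_h g) zn0))) => l' b.
  by apply/eqP; apply: contra_notT hn => h; exists l', b.
case: (eqVneq i l') => [e|ne]; last by rewrite (psi_disj HP ne (Defs.comp b (TB_h g))) eqxx in hb.
subst l'; exists l, (cHc2 (star_invol P j) (TB_h b)).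
apply: contra hb => /eqP h0.
have -> : b = 0.
  apply/TB_h_eq0/pack_inj; rewrite -(pack_cHc2 (star_invol P j)) h0.
  by apply: pack0; rewrite ?(star_invol P).
by rewrite (comp0l HC).
Qed.

Lemma pairing_nondeg_h i j l (g : Hh P i j l) :
  (forall w : Hc P i j l, scal HP (Defs.comp g w) = 0) -> g = 0.
Proof.
move=> hg; apply/eqP/negPn/negP => gn0; apply/(negP gn0)/eqP.
apply: (psi_dom_eq0l (Hc_neq0_of_Hh gn0)) => l' a.
case: (eqVneq l' l) => [e|ne]; last exact: (psi_disj HP ne).
by subst l'; rewrite (scalE (Defs.comp g a)) hg scale0r.
Qed.

Lemma pairing_nondeg_c i j l (w : Hc P i j l) :
  (forall g : Hh P i j l, scal HP (Defs.comp g w) = 0) -> w = 0.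
Proof.
move=> hw; apply/eqP/negPn/negP => wn0; apply/(negP wn0)/eqP.
apply: (psi_dom_eq0r (ex_intro _ l (ex_intro _ w wn0))) => l' b.
case: (eqVneq l l') => [e|ne]; last exact: (psi_disj HP ne).
by subst l'; rewrite (scalE (Defs.comp b w)) hw scale0r.
Qed.

Lemma form_nondeg (z z' : H) : (forall y, fm z y = fm z' y) -> z = z'.
Proof.
move=> hz; apply: Hsp_ext => i j l; apply/eqP; rewrite -subr_eq0; apply/eqP.
  apply: pairing_nondeg_h => w; have := hz (incl_c w); rewrite !form_incl_c => e.
  by rewrite compBl scalB e subrr.
apply: pairing_nondeg_c => g; have := hz (incl_h g); rewrite !form_incl_h => e.
by rewrite compBr scalB e subrr.
Qed.

Lemma opA_grading (x : H) i j l :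
  (in_Hh i j l x -> in_Hc i^* l j (A x)) /\ (in_Hc i j l x -> in_Hh i^* l j (A x)).
Proof.
split=> -[h1 h2]; split=> a b c.
- by rewrite /= /ahA h2 (TA_c0 P HC) cHh1_0.
- move=> ne; rewrite /= /acA h1 ?(TA_h0 P HC) ?cHc1_0 //.
  by apply: contra ne => /eqP [ea ec eb]; rewrite -ea (star_invol P) ec eb.
- move=> ne; rewrite /= /ahA h2 ?(TA_c0 P HC) ?cHh1_0 //.
  by apply: contra ne => /eqP [ea ec eb]; rewrite -ea (star_invol P) ec eb.
- by rewrite /= /acA h1 (TA_h0 P HC) cHc1_0.
Qed.

Lemma opB_grading (x : H) i j l :
  (in_Hh i j l x -> in_Hc l j^* i (B x)) /\ (in_Hc i j l x -> in_Hh l j^* i (B x)).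
Proof.
split=> -[h1 h2]; split=> a b c.
- by rewrite /= /ahB h2 (TB_c0 P HC) cHh2_0.
- move=> ne; rewrite /= /acB h1 ?(TB_h0 P HC) ?cHc2_0 //.
  by apply: contra ne => /eqP [ec eb ea]; rewrite -eb (star_invol P) ec ea.
- move=> ne; rewrite /= /ahB h2 ?(TB_c0 P HC) ?cHh2_0 //.
  by apply: contra ne => /eqP [ec eb ea]; rewrite -eb (star_invol P) ec ea.
- by rewrite /= /acB h1 (TB_h0 P HC) cHc2_0.
Qed.

Lemma form_eq0 (x y : H) : (forall i j l, form_term x y i j l = 0) -> fm x y = 0.
Proof.
move=> ht; have hv : supported_on (undup (supp x)) x.
  by apply: (@supported_on_sub (supp x)); [move=> i; rewrite mem_undup | exact: supported_on_supp].
rewrite (formE _ (undup_uniq _) hv).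
by apply: big1 => i _; apply: big1 => j _; apply: big1 => l _.
Qed.

Lemma form_Hh_Hh (x y : H) i j l i' j' l' : in_Hh i j l x -> in_Hh i' j' l' y -> fm x y = 0.
Proof.
move=> [_ hx] [_ hy]; apply: form_eq0 => a b c.
by rewrite /form_term hx hy !(comp0r HC) scal0 addr0.
Qed.

Lemma form_Hc_Hc (x y : H) i j l i' j' l' : in_Hc i j l x -> in_Hc i' j' l' y -> fm x y = 0.
Proof.
move=> [hx _] [hy _]; apply: form_eq0 => a b c.
by rewrite /form_term hx hy !(comp0l HC) scal0 addr0.
Qed.

Lemma form_Hh_Hc (x y : H) i j l i' j' l' : in_Hh i j l x -> in_Hc i' j' l' y ->
  (i, j, l) != (i', j', l') -> fm x y = 0.
Proof.
move=> [hx1 hx2] [hy1 hy2] ne; apply: form_eq0 => a b c.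
rewrite /form_term hy1 (comp0l HC) scal0 addr0.
case: (eqVneq (a, b, c) (i, j, l)) => [[-> -> ->]|ne'].
  by rewrite hy2 // (comp0r HC) scal0.
by rewrite hx1 // (comp0l HC) scal0.
Qed.

Lemma form_Hc_Hh (x y : H) i j l i' j' l' : in_Hc i j l x -> in_Hh i' j' l' y ->
  (i, j, l) != (i', j', l') -> fm x y = 0.
Proof. by move=> hx hy ne; rewrite form_sym (form_Hh_Hc hy hx) // eq_sym. Qed.

Section Transposes.
Variables (As Bs : H -> H).
Hypotheses (hA : is_transpose HP A As) (hB : is_transpose HP B Bs).

(* A component of [As y] is detected by pairing with an [incl] element, and
   the pairing moves to [A (incl _)], whose degree is known. *)
Lemma transpose_A_grading (y : H) p q r :
  (in_Hc p q r y -> in_Hh p^* r q (As y)) /\ (in_Hh p q r y -> in_Hc p^* r q (As y)).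
Proof.
split=> hy; split=> a b c.
- move=> ne; apply: pairing_nondeg_h => w; rewrite -form_incl_c form_sym -hA.
  apply: (form_Hh_Hc ((opA_grading _ _ _ _).2 (incl_c_in w)) hy).
  by apply: contra ne => /eqP [ea ec eb]; rewrite -ea (star_invol P) ec eb.
- apply: pairing_nondeg_c => g; rewrite -form_incl_h form_sym -hA.
  exact: (form_Hc_Hc ((opA_grading _ _ _ _).1 (incl_h_in g)) hy).
- apply: pairing_nondeg_h => w; rewrite -form_incl_c form_sym -hA.
  exact: (form_Hh_Hh ((opA_grading _ _ _ _).2 (incl_c_in w)) hy).
- move=> ne; apply: pairing_nondeg_c => g; rewrite -form_incl_h form_sym -hA.
  apply: (form_Hc_Hh ((opA_grading _ _ _ _).1 (incl_h_in g)) hy).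
  by apply: contra ne => /eqP [ea ec eb]; rewrite -ea (star_invol P) ec eb.
Qed.

Lemma transpose_B_grading (y : H) p q r :
  (in_Hc p q r y -> in_Hh r q^* p (Bs y)) /\ (in_Hh p q r y -> in_Hc r q^* p (Bs y)).
Proof.
split=> hy; split=> a b c.
- move=> ne; apply: pairing_nondeg_h => w; rewrite -form_incl_c form_sym -hB.
  apply: (form_Hh_Hc ((opB_grading _ _ _ _).2 (incl_c_in w)) hy).
  by apply: contra ne => /eqP [ec eb ea]; rewrite -eb (star_invol P) ec ea.
- apply: pairing_nondeg_c => g; rewrite -form_incl_h form_sym -hB.
  exact: (form_Hc_Hc ((opB_grading _ _ _ _).1 (incl_h_in g)) hy).
- apply: pairing_nondeg_h => w; rewrite -form_incl_c form_sym -hB.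
  exact: (form_Hh_Hh ((opB_grading _ _ _ _).2 (incl_c_in w)) hy).
- move=> ne; apply: pairing_nondeg_c => g; rewrite -form_incl_h form_sym -hB.
  apply: (form_Hc_Hh ((opB_grading _ _ _ _).1 (incl_h_in g)) hy).
  by apply: contra ne => /eqP [ec eb ea]; rewrite -eb (star_invol P) ec ea.
Qed.

Lemma transpose_comp_A_grading : grading_preserving (As \o A).
Proof.
move=> i j l x; split=> h.
  have := (transpose_A_grading (A x) i^* l j).1 ((opA_grading x i j l).1 h).
  by rewrite (star_invol P).
have := (transpose_A_grading (A x) i^* l j).2 ((opA_grading x i j l).2 h).
by rewrite (star_invol P).
Qed.

Lemma transpose_comp_B_grading : grading_preserving (Bs \o B).
Proof.
move=> i j l x; split=> h.
  have := (transpose_B_grading (B x) l j^* i).1 ((opB_grading x i j l).1 h).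
  by rewrite (star_invol P).
have := (transpose_B_grading (B x) l j^* i).2 ((opB_grading x i j l).2 h).
by rewrite (star_invol P).
Qed.

End Transposes.

Lemma opAB_cube_grading : grading_preserving ((A \o B) \o (A \o B) \o (A \o B)).
Proof.
move=> i j l x; split=> h.
  have := (opA_grading _ _ _ _).2 ((opB_grading _ _ _ _).1 ((opA_grading _ _ _ _).2
    ((opB_grading _ _ _ _).1 ((opA_grading _ _ _ _).2 ((opB_grading _ _ _ _).1 h))))).
  by rewrite !(star_invol P).
have := (opA_grading _ _ _ _).1 ((opB_grading _ _ _ _).2 ((opA_grading _ _ _ _).1
  ((opB_grading _ _ _ _).2 ((opA_grading _ _ _ _).1 ((opB_grading _ _ _ _).2 h))))).
by rewrite !(star_invol P).
Qed.

End PsiSystem.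
End StringDiagrams.

Theorem lemma5p1 (k : fieldType) (D : smcat_data k) (HC : smcat_axioms D)
  (I : choiceType) (P : psi_data D I) (HP : is_psi_system P)
  (As Bs : Hsp P -> Hsp P) :
  is_transpose HP (opA HC) As -> is_transpose HP (opB HC) Bs ->
  let A := opA HC in
  let B := opB HC in
  let L := As \o A in
  let R := Bs \o B in
  let C := (A \o B) \o (A \o B) \o (A \o B) in
  [/\ is_transpose HP L L, is_transpose HP R R & is_transpose HP C C] /\
  [/\ grading_preserving L, grading_preserving R & grading_preserving C] /\
  exists Linv Rinv Cinv : Hsp P -> Hsp P,
    [/\ cancel L Linv /\ cancel Linv L, cancel R Rinv /\ cancel Rinv R
      & cancel C Cinv /\ cancel Cinv C] /\
    (forall x, A (C (A x)) = Cinv x) /\ (forall x, B (C (B x)) = Cinv x) /\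
    (forall x, L (C (Linv x)) = C x) /\ (forall x, R (C (Rinv x)) = C x) /\
    (forall x, A (L (A x)) = Linv x) /\ (forall x, B (R (B x)) = Rinv x) /\
    (forall x, A (R (A x)) = Linv (R (Cinv x))) /\
    (forall x, B (L (B x)) = Rinv (L (C x))).
Proof.
move=> hA hB A B L R C.
have [adjoints identities] := adjoint_involution_identities (form_sym HC HP)
  (@form_nondeg _ _ HC _ _ HP) (opAK HC HP) (opBK HC HP) hA hB (form_ABA HC HP).
split; first exact: adjoints.
split; last exact: identities.
split; [exact: transpose_comp_A_grading | exact: transpose_comp_B_grading |
       exact: opAB_cube_grading].
Qed.
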